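(* Let $G$ be a plane graph whose set of vertices has no accumulation point in $\mathbb{R}^2$ and which has bounded vertex degrees. If $G$ is hyperbolic, then the lengths of its geodetic cycles are bounded, i.e. $\sup\{|C| : C \text{ a geodetic cycle of } G\}<\infty$.
   Context: A plane graph is a graph with a fixed embedding in $\mathbb{R}^2$ with no two edges crossing. For a cycle $C$ and vertices $x,y$ on $C$, $xCy$ and $yCx$ denote the two arcs of $C$ joining $x$ and $y$. A geodetic cycle is a cycle $C$ such that for every two vertices $x,y\in C$ at least one of $xCy$, $yCx$ is a geodesic in $G$ (a path whose length equals the graph distance between its endpoints). A geodetic triangle consists of three vertices and three geodesics (sides) joining them pairwise; it is $\delta$-thin if each side lies in the $\delta$-neighbourhood of the union of the other two. A connected graph is $\delta$-hyperbolic if every geodetic triangle is $\delta$-thin; a graph is hyperbolic if there is $\delta\ge0$ such that each connected component is $\delta$-hyperbolic. *)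

From Stdlib Require Export Reals List Arith Lia.
Export ListNotations.
Set Implicit Arguments.

Open Scope R_scope.

Definition point := (R * R)%type.

Definition sqdist (p q : point) : R :=
  Rsqr (fst p - fst q) + Rsqr (snd p - snd q).

Definition simple_graph (V : Type) (adj : V -> V -> Prop) : Prop :=
  (forall u v, adj u v -> adj v u) /\ (forall v, ~ adj v v).

(* A plane graph: vertices are distinct points of R^2, each edge {u,v} is an arc
   (a continuous curve t |-> arc u v t, injective on [0,1], from pos u to pos v,
   and arc v u is the same arc traversed backwards); the interior of an arc
   contains no vertex, and interiors of arcs of distinct edges are disjoint. *)
Definition plane_graph (V : Type) (adj : V -> V -> Prop) (pos : V -> point)
    (arc : V -> V -> R -> point) : Prop :=
  simple_graph adj /\
  (forall u v, pos u = pos v -> u = v) /\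
  (forall u v, adj u v ->
     continuity (fun t => fst (arc u v t)) /\ continuity (fun t => snd (arc u v t))) /\
  (forall u v, adj u v -> arc u v 0 = pos u /\ arc u v 1 = pos v) /\
  (forall u v s t, adj u v -> 0 <= s <= 1 -> 0 <= t <= 1 ->
     arc u v s = arc u v t -> s = t) /\
  (forall u v t, adj u v -> arc v u t = arc u v (1 - t)) /\
  (forall u v w t, adj u v -> 0 < t < 1 -> arc u v t <> pos w) /\
  (forall u v u' v' s t, adj u v -> adj u' v' ->
     ~ ((u = u' /\ v = v') \/ (u = v' /\ v = u')) ->
     0 < s < 1 -> 0 < t < 1 -> arc u v s <> arc u' v' t).

(* the vertex set has no accumulation point in R^2: every point has a
   neighbourhood containing only finitely many vertices *)
Definition no_accumulation_point (V : Type) (pos : V -> point) : Prop :=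
  forall p : point, exists eps : R, 0 < eps /\
    exists l : list V, forall v, sqdist (pos v) p < eps -> In v l.

Definition bounded_degree (V : Type) (adj : V -> V -> Prop) : Prop :=
  exists D : nat, forall v, exists l : list V,
    (length l <= D)%nat /\ forall w, adj v w -> In w l.

Fixpoint walk (V : Type) (adj : V -> V -> Prop) (l : list V) : Prop :=
  match l with
  | x :: ((y :: _) as t) => adj x y /\ walk adj t
  | _ => True
  end.

(* l is a walk from x to y; its length (number of edges) is length l - 1 *)
Definition walk_from_to (V : Type) (adj : V -> V -> Prop) (x y : V) (l : list V) : Prop :=
  walk adj l /\ hd_error l = Some x /\ hd_error (rev l) = Some y.

Definition geodesic_between (V : Type) (adj : V -> V -> Prop) (x y : V) (p : list V) : Prop :=
  walk_from_to adj x y p /\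
  forall q, walk_from_to adj x y q -> (length p <= length q)%nat.

Definition geodesic (V : Type) (adj : V -> V -> Prop) (p : list V) : Prop :=
  exists x y, geodesic_between adj x y p.

(* d(v,w) <= delta *)
Definition within (V : Type) (adj : V -> V -> Prop) (delta : nat) (v w : V) : Prop :=
  exists q, walk_from_to adj v w q /\ (length q <= S delta)%nat.

Definition side_thin (V : Type) (adj : V -> V -> Prop) (delta : nat) (p q r : list V) : Prop :=
  forall v, In v p -> exists w, (In w q \/ In w r) /\ within adj delta v w.

(* every geodetic triangle (x,y,z; sides p,q,r) is delta-thin.  Since a geodetic
   triangle lies in one connected component, this says that every component is
   delta-hyperbolic for the same delta. *)
Definition hyperbolic (V : Type) (adj : V -> V -> Prop) : Prop :=
  exists delta : nat, forall (x y z : V) (p q r : list V),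
    geodesic_between adj x y p -> geodesic_between adj y z q ->
    geodesic_between adj z x r ->
    side_thin adj delta p q r /\ side_thin adj delta q r p /\ side_thin adj delta r p q.

(* a cycle is a list [c_0; ...; c_{n-1}] of n >= 3 distinct vertices with
   c_i ~ c_{i+1} and c_{n-1} ~ c_0 *)
Definition cycle (V : Type) (adj : V -> V -> Prop) (C : list V) : Prop :=
  (3 <= length C)%nat /\ NoDup C /\ walk adj C /\
  match C with c :: _ => adj (last C c) c | nil => False end.

(* the arc c_i C c_j : c_i, c_{i+1}, ..., c_j  (indices mod n) *)
Definition cyc_arc (V : Type) (C : list V) (i j : nat) : list V :=
  match C with
  | nil => nil
  | c :: _ =>
      map (fun k => nth ((i + k) mod length C) C c)
          (seq 0 (S ((j + length C - i) mod length C)))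
  end.

Definition geodetic_cycle (V : Type) (adj : V -> V -> Prop) (C : list V) : Prop :=
  cycle adj C /\
  forall i j, (i < length C)%nat -> (j < length C)%nat ->
    geodesic adj (cyc_arc C i j) \/ geodesic adj (cyc_arc C j i).

Open Scope nat_scope.

(* Take the vertices of index 0, m = n/2 and n - m of a geodetic cycle of
   length n as the corners of a geodetic triangle whose sides are the arcs of the
   cycle between them (two halves of the cycle and an arc of at most one edge).
   Since the cycle is geodetic, the graph distance between two of its vertices is
   their distance along the cycle, so the vertex of index m/2 is at distance at
   least m/2 from the other two sides; delta-thinness gives n <= 4 delta + 3. *)

Lemma mod_lt_double a n : 0 < n -> a < 2 * n ->
  (a < n /\ a mod n = a) \/ (n <= a /\ a mod n = a - n).
Proof.
  intros Hn Ha. destruct (Nat.lt_ge_cases a n) as [H|H].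
  - left. split; [exact H | apply Nat.mod_small; exact H].
  - right. split; [exact H |].
    replace a with ((a - n) + 1 * n) at 1 by lia.
    rewrite Nat.Div0.mod_add. apply Nat.mod_small. lia.
Qed.

Definition cyc_gap (n i j : nat) : nat := (j + n - i) mod n.

Lemma cyc_gap_cases n i j : i < n -> j < n ->
  (i <= j /\ cyc_gap n i j = j - i) \/ (j < i /\ cyc_gap n i j = j + n - i).
Proof.
  intros Hi Hj. unfold cyc_gap.
  destruct (mod_lt_double (j + n - i) n) as [[H1 H2]|[H1 H2]]; lia.
Qed.

Lemma cyc_gap_lt n i j : i < n -> j < n -> cyc_gap n i j < n.
Proof. intros Hi Hj. destruct (cyc_gap_cases n i j Hi Hj) as [[? ?]|[? ?]]; lia. Qed.

Lemma add_cyc_gap_mod n i j : i < n -> j < n -> (i + cyc_gap n i j) mod n = j.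
Proof.
  intros Hi Hj.
  destruct (cyc_gap_cases n i j Hi Hj) as [[H E]|[H E]]; rewrite E.
  - replace (i + (j - i)) with j by lia. apply Nat.mod_small. exact Hj.
  - destruct (mod_lt_double (i + (j + n - i)) n) as [[? E']|[? E']]; lia.
Qed.

Lemma cyc_gap_add_mod n i s : i < n -> s < n -> cyc_gap n i ((i + s) mod n) = s.
Proof.
  intros Hi Hs.
  destruct (mod_lt_double (i + s) n) as [[? E]|[? E]]; try lia; rewrite E;
  [assert (Ht : i + s < n) | assert (Ht : i + s - n < n)]; try lia;
  destruct (cyc_gap_cases n i _ Hi Ht) as [[? ->]|[? ->]]; lia.
Qed.

Lemma last_eq_nth (A : Type) (l : list A) (d : A) : last l d = nth (length l - 1) l d.
Proof.
  induction l as [|a l IH]; [reflexivity|].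
  destruct l as [|b l]; [reflexivity|].
  change (last (a :: b :: l) d) with (last (b :: l) d). rewrite IH.
  simpl. rewrite Nat.sub_0_r. reflexivity.
Qed.

Section Walks.
Variables (V : Type) (adj : V -> V -> Prop).

Lemma walk_nth (d : V) (l : list V) :
  walk adj l <-> forall i, S i < length l -> adj (nth i l d) (nth (S i) l d).
Proof.
  induction l as [|a [|b l] IH]; simpl.
  1-2: split; intros; [lia | exact I].
  - split.
    + intros [Hab Hw] [|i] Hi; [exact Hab|].
      apply (proj1 IH Hw). simpl in *. lia.
    + intros H. split; [apply (H 0); lia|].
      apply IH. intros i Hi. apply (H (S i)). simpl in *. lia.
Qed.

Hypothesis adj_sym : forall u v, adj u v -> adj v u.

Lemma walk_rev (l : list V) : walk adj l -> walk adj (rev l).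
Proof.
  intros Hw. destruct l as [|d l0]; [exact I|].
  apply (walk_nth d). rewrite length_rev. intros i Hi.
  rewrite !rev_nth by lia. apply adj_sym.
  replace (length (d :: l0) - S i) with (S (length (d :: l0) - S (S i))) by lia.
  apply (proj1 (walk_nth d _) Hw). lia.
Qed.

Lemma walk_from_to_rev (x y : V) (p : list V) :
  walk_from_to adj x y p -> walk_from_to adj y x (rev p).
Proof.
  intros [Hw [Hx Hy]]. split; [apply walk_rev; exact Hw|].
  rewrite rev_involutive. split; assumption.
Qed.

End Walks.

Section GeodeticCycle.
Variables (V : Type) (adj : V -> V -> Prop).
Hypothesis adj_sym : forall u v, adj u v -> adj v u.
Variables (c : V) (cs : list V).
Hypothesis geodetic_C : geodetic_cycle adj (c :: cs).

Let C := c :: cs.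
Let n := length C.
Let vtx (k : nat) := nth (k mod n) C c.

Lemma cycle_length_ge3 : 3 <= n.
Proof. destruct geodetic_C as [[H _] _]. exact H. Qed.

Lemma cyc_arc_vtx i j :
  cyc_arc C i j = map (fun s => vtx (i + s)) (seq 0 (S (cyc_gap n i j))).
Proof. reflexivity. Qed.

Lemma adj_vtx_succ a : adj (vtx a) (vtx (S a)).
Proof.
  pose proof cycle_length_ge3 as H3.
  destruct geodetic_C as [[_ [_ [Hwalk Hclose]]] _].
  unfold vtx. replace (S a) with (a + 1) by lia.
  rewrite <- Nat.Div0.add_mod_idemp_l.
  assert (Hr : a mod n < n) by (apply Nat.mod_upper_bound; lia).
  destruct (mod_lt_double (a mod n + 1) n) as [[Hlt E]|[Hge E]]; try lia; rewrite E.
  - rewrite Nat.add_1_r. apply (proj1 (walk_nth _ adj c C) Hwalk). fold n. lia.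
  - replace (a mod n + 1 - n) with 0 by lia. replace (a mod n) with (n - 1) by lia.
    rewrite last_eq_nth in Hclose. exact Hclose.
Qed.

Lemma cyc_arc_walk_from_to i j : i < n -> j < n ->
  walk_from_to adj (nth i C c) (nth j C c) (cyc_arc C i j).
Proof.
  intros Hi Hj. rewrite cyc_arc_vtx. split; [|split].
  - apply (walk_nth _ adj (vtx (i + 0))). rewrite length_map, length_seq.
    intros s Hs. rewrite !(map_nth (fun s => vtx (i + s)) _ 0), !seq_nth by lia.
    replace (i + (0 + S s)) with (S (i + (0 + s))) by lia. apply adj_vtx_succ.
  - simpl. unfold vtx. rewrite Nat.add_0_r, Nat.mod_small by exact Hi. reflexivity.
  - rewrite seq_S, map_app, rev_app_distr. cbn [map rev app hd_error].
    unfold vtx. rewrite Nat.add_0_l, add_cyc_gap_mod by assumption. reflexivity.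
Qed.

Lemma length_cyc_arc i j : length (cyc_arc C i j) = S (cyc_gap n i j).
Proof. rewrite cyc_arc_vtx, length_map, length_seq. reflexivity. Qed.

Lemma in_cyc_arc i j v : i < n -> j < n -> In v (cyc_arc C i j) ->
  exists t, t < n /\ v = nth t C c /\ cyc_gap n i t <= cyc_gap n i j.
Proof.
  intros Hi Hj. rewrite cyc_arc_vtx, in_map_iff.
  intros [s [<- Hs]]. apply in_seq in Hs.
  pose proof (cyc_gap_lt n i j Hi Hj).
  exists ((i + s) mod n). repeat split.
  - apply Nat.mod_upper_bound. lia.
  - rewrite cyc_gap_add_mod; lia.
Qed.

Lemma nth_in_cyc_arc i j t : i < n -> t < n -> cyc_gap n i t <= cyc_gap n i j ->
  In (nth t C c) (cyc_arc C i j).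
Proof.
  intros Hi Ht Hle. rewrite cyc_arc_vtx, in_map_iff.
  exists (cyc_gap n i t). split.
  - unfold vtx. rewrite add_cyc_gap_mod; auto.
  - apply in_seq. lia.
Qed.

(* The geodetic property turns the shorter of the two arcs into a lower bound
   for every walk; the longer arc is handled by reversing the walk. *)
Lemma cycle_walk_length_ge i j q : i < n -> j < n ->
  walk_from_to adj (nth i C c) (nth j C c) q ->
  S (min (cyc_gap n i j) (cyc_gap n j i)) <= length q.
Proof.
  intros Hi Hj Hq. destruct geodetic_C as [_ Hgeo]. fold C n in Hgeo.
  destruct (Hgeo i j Hi Hj) as [[x [y [[_ [Hx Hy]] Hmin]]]|[x [y [[_ [Hx Hy]] Hmin]]]].
  - destruct (cyc_arc_walk_from_to i j Hi Hj) as [_ [Hx' Hy']].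
    rewrite Hx' in Hx; rewrite Hy' in Hy. injection Hx as <-. injection Hy as <-.
    specialize (Hmin q Hq). rewrite length_cyc_arc in Hmin. lia.
  - destruct (cyc_arc_walk_from_to j i Hj Hi) as [_ [Hx' Hy']].
    rewrite Hx' in Hx; rewrite Hy' in Hy. injection Hx as <-. injection Hy as <-.
    specialize (Hmin _ (walk_from_to_rev _ adj adj_sym _ _ _ Hq)).
    rewrite length_cyc_arc, length_rev in Hmin. lia.
Qed.

Lemma cyc_arc_geodesic i j : i < n -> j < n -> 2 * cyc_gap n i j <= n ->
  geodesic_between adj (nth i C c) (nth j C c) (cyc_arc C i j).
Proof.
  intros Hi Hj Hhalf. split; [apply cyc_arc_walk_from_to; assumption|].
  intros q Hq. rewrite length_cyc_arc.
  pose proof (cycle_walk_length_ge i j q Hi Hj Hq).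
  destruct (cyc_gap_cases n i j Hi Hj) as [[? E]|[? E]];
  destruct (cyc_gap_cases n j i Hj Hi) as [[? E']|[? E']]; lia.
Qed.

Lemma geodetic_cycle_length_le (delta : nat) :
  (forall x y z p q r, geodesic_between adj x y p -> geodesic_between adj y z q ->
     geodesic_between adj z x r -> side_thin adj delta p q r) ->
  n <= 4 * delta + 3.
Proof.
  intros Hthin. pose proof cycle_length_ge3 as H3.
  destruct (Nat.le_gt_cases n (4 * delta + 3)) as [Hle|Hgt]; [exact Hle | exfalso].
  set (m := n / 2). set (k := m / 2).
  assert (Hm : 2 * m <= n <= 2 * m + 1).
  { pose proof (Nat.div_mod_eq n 2). pose proof (Nat.mod_upper_bound n 2). lia. }
  assert (Hk : 2 * k <= m <= 2 * k + 1).
  { pose proof (Nat.div_mod_eq m 2). pose proof (Nat.mod_upper_bound m 2). lia. }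
  assert (H0 : 0 < n) by lia. assert (Hmn : m < n) by lia.
  assert (Hnm : n - m < n) by lia. assert (Hkn : k < n) by lia.
  destruct (cyc_gap_cases n 0 m H0 Hmn) as [[_ G0m]|[? _]]; [|lia].
  destruct (cyc_gap_cases n m (n - m) Hmn Hnm) as [[_ Gmnm]|[? _]]; [|lia].
  destruct (cyc_gap_cases n (n - m) 0 Hnm H0) as [[? _]|[_ Gnm0]]; [lia|].
  destruct (Hthin _ _ _ _ _ _
    (cyc_arc_geodesic 0 m H0 Hmn ltac:(lia))
    (cyc_arc_geodesic m (n - m) Hmn Hnm ltac:(lia))
    (cyc_arc_geodesic (n - m) 0 Hnm H0 ltac:(lia)) (nth k C c))
    as [w [Hw [q [Hq Hlen]]]].
  { apply nth_in_cyc_arc; try lia.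
    destruct (cyc_gap_cases n 0 k H0 Hkn) as [[_ ->]|[? _]]; lia. }
  assert (Hfar : exists t, t < n /\ w = nth t C c /\ (m <= t \/ t = 0)).
  { destruct Hw as [Hw|Hw].
    - destruct (in_cyc_arc m (n - m) w Hmn Hnm Hw) as [t [Ht [-> Hg]]].
      exists t. split; [exact Ht | split; [reflexivity |]].
      destruct (cyc_gap_cases n m t Hmn Ht) as [[? ?]|[? ?]]; lia.
    - destruct (in_cyc_arc (n - m) 0 w Hnm H0 Hw) as [t [Ht [-> Hg]]].
      exists t. split; [exact Ht | split; [reflexivity |]].
      destruct (cyc_gap_cases n (n - m) t Hnm Ht) as [[? ?]|[? ?]]; lia. }
  destruct Hfar as [t [Ht [-> Ht_range]]].
  pose proof (cycle_walk_length_ge k t q Hkn Ht Hq) as Hlower.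
  destruct (cyc_gap_cases n k t Hkn Ht) as [[? E]|[? E]]; rewrite E in Hlower;
  destruct (cyc_gap_cases n t k Ht Hkn) as [[? E']|[? E']]; rewrite E' in Hlower; lia.
Qed.

End GeodeticCycle.

Theorem lemma3p1 (V : Type) (adj : V -> V -> Prop) (pos : V -> point)
    (arc : V -> V -> R -> point) :
  plane_graph adj pos arc ->
  no_accumulation_point pos ->
  bounded_degree adj ->
  hyperbolic adj ->
  exists N : nat, forall C : list V, geodetic_cycle adj C -> (length C <= N)%nat.
Proof.
  intros [[adj_sym _] _] _ _ [delta Hthin].
  exists (4 * delta + 3). intros [|c cs] HC.
  - destruct HC as [[H3 _] _]. simpl in H3. lia.
  - apply (geodetic_cycle_length_le _ adj adj_sym c cs HC delta).
    intros x y z p q r Hp Hq Hr. exact (proj1 (Hthin x y z p q r Hp Hq Hr)).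
Qed.
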